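(* Let $q$ be a power of $2$ and let $\mathcal{C}$ be the Hermitian-Lifted Code (defined in the context). Then the minimum Hamming distance $d$ of $\mathcal{C}$ satisfies $q^2 \leq d \leq q^3 - q^2 + 1$.
   Context: Let $\mathcal{X} = \{(x,y) \in (\mathbb{F}_{q^2})^2 : x^q + x = y^{q+1}\}$ (affine $\mathbb{F}_{q^2}$-points of the Hermitian curve, $|\mathcal{X}|=q^3$). For $\alpha,\beta\in\mathbb{F}_{q^2}$ let $L_{\alpha,\beta}(t) = (\alpha t+\beta,t)$ and $\mathcal{L}=\{L_{\alpha,\beta}\}$. Let $\mathcal{F}$ be the set of $f \in \mathbb{F}_{q^2}[x,y]$ such that for every $L \in \mathcal{L}$ there exists $g \in \mathbb{F}_{q^2}[t]$ with $\deg g \le q-1$ and $f(L(t)) = g(t)$ for all $t\in\mathbb{F}_{q^2}$ with $L(t)\in\mathcal{X}$. The Hermitian-Lifted Code is $\mathcal{C} = \{(f(P))_{P\in\mathcal{X}} : f\in\mathcal{F}\}$. *)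

From HB Require Import structures.
From mathcomp Require Import all_boot all_order all_algebra all_field.
From mathcomp Require Import mpoly.
Set Implicit Arguments. Unset Strict Implicit. Unset Printing Implicit Defensive.
Import GRing.Theory.
Local Open Scope ring_scope.

Section Hermitian.
Variable F : finFieldType.
Variable q : nat.

Definition herm_pt (P : F * F) : bool := P.1 ^+ q + P.1 == P.2 ^+ q.+1.

Definition HPt := {P : F * F | herm_pt P}.

Definition evalxy (f : {mpoly F[2]}) (a b : F) : F :=
  f.@[fun i : 'I_2 => if val i == 0%N then a else b].

(* f belongs to the family F: its restriction to every line
   L_{alpha,beta}(t) = (alpha t + beta, t), on the points t with L(t) in X,
   agrees with a univariate polynomial of degree <= q - 1 *)
Definition lifted_fam (f : {mpoly F[2]}) : Prop :=
  forall alpha beta : F, exists g : {poly F},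
    (size g <= q)%N /\
    forall t : F, herm_pt (alpha * t + beta, t) ->
      evalxy f (alpha * t + beta) t = g.[t].

Definition HL_code (w : {ffun HPt -> F}) : Prop :=
  exists f : {mpoly F[2]}, lifted_fam f /\ forall P : HPt, w P = evalxy f (val P).1 (val P).2.

End Hermitian.

Definition hamming (I : finType) (K : eqType) (w1 w2 : {ffun I -> K}) : nat :=
  #|[set i | w1 i != w2 i]|.

Definition is_min_dist (I : finType) (K : eqType) (C : {ffun I -> K} -> Prop) (d : nat) : Prop :=
  (exists w1 w2, [/\ C w1, C w2, w1 <> w2 & hamming w1 w2 = d]) /\
  (forall w1 w2, C w1 -> C w2 -> w1 <> w2 -> (d <= hamming w1 w2)%N).

From HB Require Import structures.
From mathcomp Require Import all_boot all_order all_algebra all_field.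
From mathcomp Require Import mpoly.
From mathcomp Require Import ring zify.
From Stdlib Require Import Classical Wf_nat.
Set Implicit Arguments. Unset Strict Implicit. Unset Printing Implicit Defensive.
Import GRing.Theory.
Local Open Scope ring_scope.

(* Let f be a lifted polynomial with f(a, b) <> 0 at a point of X. Every line
   x = al t + (a - al b) through (a, b) with al <> b^q meets X in q further
   points, parametrised by a fibre of the trace z |-> z^q + z. The restriction of
   f to such a line has degree < q and does not vanish at t = b, so it is nonzero
   at one of these points; distinct lines through (a, b) meet only there, hence f
   is nonzero at >= 1 + (q^2 - 1) points of X.
   Conversely, the product of x - y - a over the q - 1 nonzero roots a of
   z^q + z restricts to every line as a polynomial of degree q - 1, does not
   vanish at (0, 0), and vanishes on the q - 1 disjoint lines x - y = a, each
   meeting X in q + 1 points; as |X| = q^3, its weight is <= q^3 - q^2 + 1. *)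

Lemma card_roots_lt_size (R : finIdomainType) (S : {set R}) (p : {poly R}) :
  p != 0 -> {in S, forall x, root p x} -> (#|S| < size p)%N.
Proof.
move=> p_nz S_root; rewrite cardE; apply: max_poly_roots => //; last exact: enum_uniq.
by apply/allP => x; rewrite mem_enum; apply: S_root.
Qed.

Lemma size_prod_leq_lin (R : nzRingType) (I : Type) (s : seq I) (G : I -> {poly R}) :
  (forall i, size (G i) <= 2)%N -> (size (\prod_(i <- s) G i)%R <= (size s).+1)%N.
Proof.
move=> G_lin; elim: s => [|i s IHs]; first by rewrite big_nil size_poly1.
rewrite big_cons /=; apply: leq_trans (size_polyMleq _ _) _.
by move: IHs (G_lin i); set m := size _; set n := size (G i); lia.
Qed.

Lemma card_set_pair (A B : finType) (pr : pred (A * B)) :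
  #|[set u | pr u]| = (\sum_(b : B) #|[set a | pr (a, b)]|)%N.
Proof.
rewrite -sum1_card (partition_big snd xpredT) //=; apply: eq_bigr => b _.
have pair_inj : injective (fun a : A => (a, b)) by move=> x y [].
rewrite -(card_imset _ pair_inj).
rewrite -sum1_card; apply: eq_bigl => -[x y]; rewrite !inE /=.
apply/andP/imsetP => [[pr_xy /eqP <-] | [x' ]]; first by exists x; rewrite ?inE.
by rewrite inE => pr_x' [-> ->].
Qed.

Lemma card_fiber_eq (T U : finType) (A : {set T}) (C : {set U}) (f : T -> U) m k :
  {in A, forall x, f x \in C} -> (#|C| <= m)%N ->
  (forall c, c \in C -> #|[set x in A | f x == c]| <= k)%N ->
  #|A| = (m * k)%N ->
  forall c, c \in C -> #|[set x in A | f x == c]| = k.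
Proof.
move=> fAC leCm le_fiber cardA c0 c0C.
have sumA : #|A| = (\sum_(c in C) #|[set x in A | f x == c]|)%N.
  rewrite -sum1_card (partition_big f (mem C)) //=.
  by apply: eq_bigr => c _; rewrite -sum1_card; apply: eq_bigl => x; rewrite inE.
have sumk : (\sum_(c in C) k = #|C| * k)%N by rewrite sum_nat_const.
rewrite (bigD1 c0) //= in sumA; rewrite (bigD1 c0) //= in sumk.
have : (\sum_(c in C | c != c0) #|[set x in A | f x == c]| <= \sum_(c in C | c != c0) k)%N.
  by apply: leq_sum => c /andP [cC _]; apply: le_fiber.
have := le_fiber c0 c0C; have : (#|C| * k <= m * k)%N by rewrite leq_mul2r leCm orbT.
lia.
Qed.

Section HermitianCurve.
Variables (F : finFieldType) (q : nat).
Hypotheses (cardF : #|F| = (q ^ 2)%N) (pchar_q : [pchar F].-nat q).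

Lemma q_gt1 : (1 < q)%N.
Proof. by have := finNzRing_gt1 F; rewrite cardF; case: q => [|[|]]. Qed.

Lemma q_gt0 : (0 < q)%N.
Proof. exact: ltnW q_gt1. Qed.

Lemma expr0q : 0 ^+ q = 0 :> F.
Proof. by rewrite expr0n gtn_eqF ?q_gt0. Qed.

Lemma frobD (u v : F) : (u + v) ^+ q = u ^+ q + v ^+ q.
Proof. exact: exprDn_pchar. Qed.

Lemma frobB (u v : F) : (u - v) ^+ q = u ^+ q - v ^+ q.
Proof. by rewrite frobD exprNn_pchar. Qed.

Lemma frobK (u : F) : (u ^+ q) ^+ q = u.
Proof. by rewrite -exprM mulnn -cardF expf_card. Qed.

Lemma card_frob_fixed : (#|[set c : F | c ^+ q == c]| <= q)%N.
Proof.
have size_p : size ('X^q - 'X : {poly F}) = q.+1.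
  by rewrite size_polyDl ?size_polyXn // size_polyN size_polyX ltnS q_gt1.
rewrite -ltnS -size_p; apply: card_roots_lt_size => [|x].
  by rewrite -size_poly_eq0 size_p.
by rewrite inE /root !hornerE subr_eq0.
Qed.

Lemma card_trace_fiber (c : F) : c ^+ q = c -> #|[set z : F | z ^+ q + z == c]| = q.
Proof.
move=> c_fixed.
have fiberE : [set z : F | z ^+ q + z == c] = [set z in setT | z ^+ q + z == c].
  by apply/setP => z; rewrite !inE.
rewrite fiberE; apply: (card_fiber_eq _ card_frob_fixed) => [z _|c' _||].
- by rewrite inE frobD frobK addrC.
- have size_p : size ('X^q + ('X - c'%:P) : {poly F}) = q.+1.
    by rewrite size_polyDl ?size_polyXn // size_XsubC ltnS q_gt1.
  rewrite -ltnS -size_p; apply: card_roots_lt_size => [|x].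
    by rewrite -size_poly_eq0 size_p.
  by rewrite !inE /root !hornerE subr_eq0.
- by rewrite (cardsT F) cardF mulnn.
- by rewrite inE c_fixed.
Qed.

Lemma herm_secantE (a b al s : F) : herm_pt q (a, b) ->
  herm_pt q (a + al * s, b + s) = (s ^+ q * s == (al ^+ q - b) * s ^+ q + (al - b ^+ q) * s).
Proof.
move=> /eqP ab_herm; have a_frob : a ^+ q = b * b ^+ q - a by rewrite -exprS -ab_herm addrK.
rewrite /herm_pt /= frobD exprMn a_frob exprS frobD -subr_eq0 -[RHS]subr_eq0 -oppr_eq0.
by congr (_ == 0); ring.
Qed.

Lemma card_secant_points (a b al : F) : herm_pt q (a, b) -> al != b ^+ q ->
  (q <= #|[set t | (t != b) && herm_pt q ((al * t + (a - al * b))%R, t)]|)%N.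
Proof.
move=> ab_herm al_ne.
set g := al - b ^+ q.
have g_nz : g != 0 by rewrite subr_eq0.
have gq_nz : g ^+ q != 0 by rewrite expf_neq0.
set c := (g ^+ q * g)^-1.
have c_fixed : c ^+ q = c by rewrite /c exprVn exprMn frobK mulrC.
set Z := [set z : F | z ^+ q + z == c].
have Z_nz : {in Z, forall z, z != 0}.
  move=> z; rewrite inE; apply: contraL => /eqP ->.
  by rewrite expr0q addr0 eq_sym invr_eq0 mulf_neq0.
(* By [herm_secantE], [b + s] is such a point iff [s ^+ q.+1 = g ^+ q * s ^+ q + g * s];
   for [s = (g * z)^-1] this is the equation [z ^+ q + z = c] of [Z]. *)
pose t_of z := b + (g * z)^-1.
have t_inj : {in Z &, injective t_of}.
  by move=> z1 z2 _ _ /addrI /invr_inj /mulfI; apply.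
rewrite -{1}(card_trace_fiber c_fixed) -(card_in_imset t_inj).
apply/subset_leq_card/subsetP => _ /imsetP [z zZ ->].
have z_nz := Z_nz z zZ.
have zq_nz : z ^+ q != 0 by rewrite expf_neq0.
have t_ne : b + (g * z)^-1 != b by rewrite -subr_eq0 addrC addKr invr_eq0 mulf_neq0.
rewrite inE /t_of t_ne /=.
have -> : al * (b + (g * z)^-1) + (a - al * b) = a + al * (g * z)^-1 by ring.
have gq : g ^+ q = al ^+ q - b by rewrite frobB frobK.
rewrite herm_secantE // -/g -gq exprVn exprMn; apply/eqP.
have zc : z ^+ q + z = c by move: zZ; rewrite inE => /eqP.
transitivity ((z ^+ q + z) / (z ^+ q * z)); last by field; rewrite z_nz zq_nz g_nz gq_nz.
by rewrite zc /c; field; rewrite z_nz zq_nz g_nz gq_nz.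
Qed.

Definition herm_support (f : {mpoly F[2]}) : {set F * F} :=
  [set P | herm_pt q P && (evalxy f P.1 P.2 != 0)].

Lemma lifted_line_support (f : {mpoly F[2]}) (a b al : F) : lifted_fam q f ->
    (a, b) \in herm_support f -> al != b ^+ q ->
  exists2 t, t != b & (al * t + (a - al * b), t) \in herm_support f.
Proof.
move=> f_lifted; rewrite inE /= => /andP [ab_herm fab_nz] al_ne.
have [g [size_g g_line]] := f_lifted al (a - al * b).
have gb : g.[b] = evalxy f a b.
  have line_b : al * b + (a - al * b) = a by ring.
  by have := g_line b; rewrite line_b => /(_ ab_herm) <-.
have g_nz : g != 0 by apply: contraNneq fab_nz => g0; rewrite -gb g0 horner0.
pose on_line t := (al * t + (a - al * b), t).
have [t /andP [tb t_supp] | no_t] := pickP (fun t => (t != b) && (on_line t \in herm_support f)).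
  by exists t.
suff : (#|[set t | (t != b) && herm_pt q ((al * t + (a - al * b))%R, t)]| < size g)%N.
  by have := card_secant_points ab_herm al_ne; lia.
apply: card_roots_lt_size g_nz _ => t; rewrite inE => /andP [tb t_herm].
have := no_t t; rewrite /root -g_line // inE tb t_herm /=.
by move/negbFE.
Qed.

Lemma card_herm_support_ge (f : {mpoly F[2]}) (P0 : F * F) : lifted_fam q f ->
  P0 \in herm_support f -> (q ^ 2 <= #|herm_support f|)%N.
Proof.
case: P0 => a b f_lifted P0_supp.
set T := [set P in herm_support f | P.2 != b].
pose slope (P : F * F) := (P.1 - a) / (P.2 - b).
have slopes_T : [set al | al != b ^+ q] \subset slope @: T.
  apply/subsetP => al; rewrite inE => al_ne.
  have [t tb t_supp] := lifted_line_support f_lifted P0_supp al_ne.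
  apply/imsetP; exists (al * t + (a - al * b), t); first by rewrite inE t_supp.
  by rewrite /slope /=; field; rewrite subr_eq0.
have card_slopes : #|[set al | al != b ^+ q]| = (q ^ 2).-1.
  by rewrite -cardF -(cardsC1 (b ^+ q)); apply: eq_card => x; rewrite !inE.
have P0_T : (a, b) |: T \subset herm_support f.
  by apply/subsetP => P; rewrite in_setU1 => /predU1P [-> // | ]; rewrite inE => /andP [].
have T_lt : (#|T| < #|herm_support f|)%N.
  by have := subset_leq_card P0_T; rewrite cardsU1 inE /= eqxx andbF add1n.
have T_ge : ((q ^ 2).-1 <= #|T|)%N.
  by rewrite -card_slopes; apply: leq_trans (subset_leq_card slopes_T) (leq_imset_card _ _).
have : (0 < q ^ 2)%N by rewrite sqrn_gt0 q_gt0.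
by move: (q ^ 2)%N T_ge => n; lia.
Qed.

Lemma card_herm_pts : #|[set P : F * F | herm_pt q P]| = (q ^ 3)%N.
Proof.
rewrite card_set_pair.
under eq_bigr => y _.
  have -> : [set x | herm_pt q (x, y)] = [set x | x ^+ q + x == y ^+ q.+1].
    by apply/setP => x; rewrite !inE.
  rewrite card_trace_fiber; last by rewrite exprS exprMn frobK mulrC.
  over.
by rewrite sum_nat_const cardT -cardE cardF -expnSr.
Qed.

Definition trace_roots : {set F} := [set a | (a ^+ q + a == 0) && (a != 0)].

Lemma card_trace_roots : #|trace_roots| = q.-1.
Proof.
have := card_trace_fiber (c := 0); rewrite expr0q => /(_ erefl).
rewrite (cardsD1 0) inE expr0q addr0 eqxx add1n => <-.
by apply: eq_card => x; rewrite !inE andbC.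
Qed.

Lemma card_herm_diag_line (a : F) : a \in trace_roots ->
  (q < #|[set t | herm_pt q ((t + a)%R, t)]|)%N.
Proof.
rewrite inE => /andP [/eqP a_trace a_nz].
have a0_herm : herm_pt q (a, 0) by rewrite /herm_pt /= a_trace exprS mul0r.
have := card_secant_points (al := 1) a0_herm; rewrite expr0q => /(_ (oner_neq0 _)).
set T := [set t | herm_pt q (t + a, t)].
have -> : [set t | (t != 0) && herm_pt q ((1 * t + (a - 1 * 0))%R, t)] = T :\ 0.
  by apply/setP => t; rewrite !inE mul1r mulr0 subr0 addrC.
by rewrite [in X in (_ < X)%N](cardsD1 0) inE add0r /herm_pt /= a_trace exprS mul0r eqxx.
Qed.

Definition diag_lines : {mpoly F[2]} :=
  \prod_(a in trace_roots) ('X_ord0 - 'X_ord_max - a%:MP).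

Lemma evalxy_diag_lines (x y : F) :
  evalxy diag_lines x y = \prod_(a in trace_roots) (x - y - a).
Proof.
rewrite /evalxy /diag_lines rmorph_prod; apply: eq_bigr => a _.
by rewrite !rmorphB /= !mevalXU mevalC.
Qed.

Lemma lifted_diag_lines : lifted_fam q diag_lines.
Proof.
move=> al be; exists (\prod_(a in trace_roots) ((al - 1)%:P * 'X + (be - a)%:P)); split.
  rewrite -big_enum; apply: leq_trans (size_prod_leq_lin _ _) _ => [a|].
    by rewrite size_MXaddC; case: ifP => // _; rewrite size_polyC; case: (_ != 0).
  by rewrite -cardE card_trace_roots prednK // q_gt0.
move=> t _; rewrite evalxy_diag_lines horner_prod; apply: eq_bigr => a _.
by rewrite hornerMXaddC hornerC; ring.
Qed.

Lemma diag_lines_00 : ((0 : F), (0 : F)) \in herm_support diag_lines.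
Proof.
rewrite inE /herm_pt /= exprS mul0r expr0q addr0 eqxx evalxy_diag_lines /=.
by apply/prodf_neq0 => a; rewrite inE subrr sub0r oppr_eq0 => /andP [].
Qed.

Lemma card_herm_zeros_diag_lines :
  (q.-1 * q.+1 <= #|[set P | herm_pt q P && (evalxy diag_lines P.1 P.2 == 0)%R]|)%N.
Proof.
set U := [set u : F * F | (u.2 \in trace_roots) && herm_pt q (u.1 + u.2, u.1)].
have U_ge : (q.-1 * q.+1 <= #|U|)%N.
  rewrite card_set_pair (bigID (mem trace_roots)) /= -card_trace_roots -sum_nat_const.
  apply: leq_trans (leq_addr _ _); apply: leq_sum => a a_root.
  rewrite (eq_card (B := [set t | herm_pt q ((t + a)%R, t)])) ?card_herm_diag_line // => t.
  by move: a_root; rewrite !inE => ->.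
pose shear (u : F * F) := (u.1 + u.2, u.1).
have shear_inj : injective shear.
  by move=> [x1 y1] [x2 y2]; rewrite /shear /= => -[+ e2]; rewrite e2 => /addrI ->.
apply: leq_trans U_ge _; rewrite -(card_imset _ shear_inj).
apply/subset_leq_card/subsetP => P /imsetP [[t a]]; rewrite in_set /= => /andP [a_root t_herm] ->.
have diag_a : t + a - t - a = 0 by ring.
by rewrite inE t_herm evalxy_diag_lines (bigD1 a) //= diag_a mul0r.
Qed.

Lemma card_herm_support_diag_lines : (#|herm_support diag_lines| <= q ^ 3 - q ^ 2 + 1)%N.
Proof.
set E := [set P : F * F | evalxy diag_lines P.1 P.2 == 0].
have -> : herm_support diag_lines = [set P | herm_pt q P] :\: E.
  by apply/setP => P; rewrite !inE andbC.
have := card_herm_zeros_diag_lines.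
have -> : [set P | herm_pt q P && (evalxy diag_lines P.1 P.2 == 0)] = [set P | herm_pt q P] :&: E.
  by apply/setP => P; rewrite !inE.
have := cardsID E [set P | herm_pt q P]; rewrite card_herm_pts.
have : (q.-1 * q.+1 + 1 = q ^ 2)%N by rewrite -mulnn; case: (q) q_gt0 => // n _ /=; nia.
have : (q ^ 2 <= q ^ 3)%N by rewrite leq_exp2l // q_gt1.
move: (q ^ 2)%N (q ^ 3)%N (q.-1 * q.+1)%N => n m k.
by set Z := #|_ :&: E|; set S := #|_ :\: E|; lia.
Qed.

Lemma evalxyB (f g : {mpoly F[2]}) (x y : F) :
  evalxy (f - g) x y = evalxy f x y - evalxy g x y.
Proof. exact: mevalB. Qed.

Lemma lifted_fam0 : lifted_fam q (0 : {mpoly F[2]}).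
Proof.
move=> al be; exists 0; split; first by rewrite size_poly0.
by move=> t _; rewrite /evalxy meval0 horner0.
Qed.

Lemma lifted_famB (f g : {mpoly F[2]}) :
  lifted_fam q f -> lifted_fam q g -> lifted_fam q (f - g).
Proof.
move=> f_lifted g_lifted al be.
have [f1 [size_f1 f_line]] := f_lifted al be; have [g1 [size_g1 g_line]] := g_lifted al be.
exists (f1 - g1); split.
  by rewrite (leq_trans (size_polyD _ _)) // size_polyN geq_max size_f1 size_g1.
by move=> t t_herm; rewrite hornerD hornerN -f_line // -g_line // evalxyB.
Qed.

Lemma hamming_evalxy (w1 w2 : {ffun HPt F q -> F}) (f1 f2 : {mpoly F[2]}) :
    (forall P, w1 P = evalxy f1 (val P).1 (val P).2) ->
    (forall P, w2 P = evalxy f2 (val P).1 (val P).2) ->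
  hamming w1 w2 = #|herm_support (f1 - f2)|.
Proof.
move=> w1E w2E; rewrite /hamming -(card_imset _ val_inj); apply: eq_card => P.
rewrite inE evalxyB subr_eq0; apply/imsetP/andP => [[x] | [P_herm]].
  by rewrite inE w1E w2E => + ->; rewrite (valP x).
by exists (exist _ P P_herm); rewrite // inE w1E w2E.
Qed.

Lemma HL_code_dist_ge (w1 w2 : {ffun HPt F q -> F}) :
  HL_code w1 -> HL_code w2 -> w1 <> w2 -> (q ^ 2 <= hamming w1 w2)%N.
Proof.
move=> [f1 [f1_lifted w1E]] [f2 [f2_lifted w2E]] w12.
rewrite (hamming_evalxy w1E w2E).
have [P w12P] : exists P, w1 P != w2 P.
  apply/existsP; apply: contra_notT w12 => /existsPn w12_eq.
  by apply/ffunP => P; apply/eqP/negPn/w12_eq.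
apply: (card_herm_support_ge (lifted_famB f1_lifted f2_lifted) (P0 := val P)).
by rewrite inE (valP P) evalxyB -w1E -w2E subr_eq0.
Qed.

Lemma HL_code_dist_le : exists w1 w2 : {ffun HPt F q -> F},
  [/\ HL_code w1, HL_code w2, w1 <> w2 & (hamming w1 w2 <= q ^ 3 - q ^ 2 + 1)%N].
Proof.
pose w f := [ffun P : HPt F q => evalxy f (val P).1 (val P).2].
have wE f P : w f P = evalxy f (val P).1 (val P).2 by rewrite ffunE.
have /[!inE] /andP [herm00 diag_lines00] := diag_lines_00.
exists (w diag_lines), (w 0); split.
- by exists diag_lines; split; [exact: lifted_diag_lines | exact: wE].
- by exists 0; split; [exact: lifted_fam0 | exact: wE].
- move/ffunP/(_ (exist _ (0, 0) herm00)); rewrite !wE /evalxy meval0 /=.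
  exact/eqP.
- by rewrite (hamming_evalxy (wE _) (wE _)) subr0 card_herm_support_diag_lines.
Qed.

End HermitianCurve.

Theorem mainTheorem8 (F : finFieldType) (q : nat) :
  (exists m : nat, q = 2 ^ m)%N ->
  #|F| = (q ^ 2)%N ->
  exists d : nat, is_min_dist (@HL_code F q) d /\
    (q ^ 2 <= d)%N /\ (d <= q ^ 3 - q ^ 2 + 1)%N.
Proof.
move=> [m qE] cardF.
have pchar2 : 2 \in [pchar F].
  by apply: (@card_finPcharP F 2 (m * 2)); rewrite // cardF qE -expnM.
have pchar_q : [pchar F].-nat q by rewrite (eq_pnat _ (pcharf_eq pchar2)) qE pnatX pnat_id.
pose is_dist n := exists w1 w2 : {ffun HPt F q -> F},
  [/\ HL_code w1, HL_code w2, w1 <> w2 & hamming w1 w2 = n].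
have [w1 [w2 [c1 c2 w12 dist_le]]] := HL_code_dist_le cardF pchar_q.
have is_dist_inh : exists n, is_dist n by exists (hamming w1 w2), w1, w2.
have [d [[[u1 [u2 [cu1 cu2 u12 <-]]] d_min] _]] :=
  dec_inh_nat_subset_has_unique_least_element is_dist (fun n => classic (is_dist n)) is_dist_inh.
exists (hamming u1 u2); split; [split | split].
- by exists u1, u2.
- by move=> v1 v2 cv1 cv2 v12; apply/leP/d_min; exists v1, v2.
- exact: HL_code_dist_ge cardF pchar_q _ _ cu1 cu2 u12.
- by apply: leq_trans dist_le; apply/leP/d_min; exists w1, w2.
Qed.
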